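(* Let $X$ be a complex manifold and let $X=\bigcup_{j\ge1}K_j$ where $(K_j)$ is a sequence of compact sets with $K_j\subset\mathring K_{j+1}$ for all $j$. Let $B\subset X$ be compact and assume there is $j_0\in\mathbb{N}$ with $B\subset K_{j_0}$ and $\widehat B_{\mathcal{O}(K_j)}=\widehat B_{\mathcal{O}(K_{j_0})}$ for all $j\ge j_0$. Then for any other sequence of compact sets $(L_l)_{l\ge1}$ with $L_l\subset\mathring L_{l+1}$ for all $l$ and $\bigcup_l L_l=X$, there exists $l_1\in\mathbb{N}$ such that $B\subset L_{l_1}$ and $\widehat B_{\mathcal{O}(L_l)}=\widehat B_{\mathcal{O}(L_{l_1})}$ for all $l\ge l_1$.
   Context: For compact sets $K\subset L$ in a complex manifold, $\mathcal{O}(L)$ denotes the algebra of functions holomorphic on some open neighborhood of $L$, and $\widehat K_{\mathcal{O}(L)}=\{x\in L: |f(x)|\le\sup_K|f| \text{ for all } f\in\mathcal{O}(L)\}$. *)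

From Stdlib Require Import Reals List.
From Stdlib Require Vectors.Fin.
From Coquelicot Require Import Coquelicot.
Open Scope R_scope.

Definition Cn (n : nat) : Type := Fin.t n -> C.

Definition Cn_open {n : nat} (U : Cn n -> Prop) : Prop :=
  forall z, U z -> exists eps : R, 0 < eps /\
    forall w : Cn n, (forall k, Cmod (w k - z k) < eps) -> U w.

Definition Cn_upd {n : nat} (z : Cn n) (k : Fin.t n) (t : C) : Cn n :=
  fun m => if Fin.eq_dec m k then t else z m.

Definition Cn_continuous_at {n : nat} (F : Cn n -> C) (z : Cn n) : Prop :=
  forall eps : R, 0 < eps -> exists delta : R, 0 < delta /\
    forall w : Cn n, (forall k, Cmod (w k - z k) < delta) ->
      Cmod (F w - F z) < eps.

(* F is holomorphic on the open set U of C^n: continuous and complex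
   differentiable in each variable separately (Osgood's definition). *)
Definition Cn_holomorphic_on {n : nat} (U : Cn n -> Prop) (F : Cn n -> C) : Prop :=
  forall z, U z ->
    Cn_continuous_at F z /\
    forall k : Fin.t n,
      @ex_derive C_AbsRing C_NormedModule (fun t => F (Cn_upd z k t)) (z k).

Record ComplexManifold := {
  cm_pt :> Type;
  cm_open : (cm_pt -> Prop) -> Prop;
  cm_open_full : cm_open (fun _ => True);
  cm_open_inter : forall U V, cm_open U -> cm_open V ->
      cm_open (fun x => U x /\ V x);
  cm_open_union : forall (I : Type) (F : I -> cm_pt -> Prop),
      (forall i, cm_open (F i)) -> cm_open (fun x => exists i, F i x);
  cm_hausdorff : forall x y : cm_pt, x <> y ->
      exists U V, cm_open U /\ cm_open V /\ U x /\ V y /\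
        (forall z, U z -> V z -> False);
  cm_second_countable : exists Bs : nat -> cm_pt -> Prop,
      (forall m, cm_open (Bs m)) /\
      forall U x, cm_open U -> U x ->
        exists m, Bs m x /\ forall y, Bs m y -> U y;
  cm_dim : nat;
  cm_chart_index : Type;
  cm_chart_dom : cm_chart_index -> cm_pt -> Prop;
  cm_chart : cm_chart_index -> cm_pt -> Cn cm_dim;
  cm_chart_dom_open : forall i, cm_open (cm_chart_dom i);
  cm_chart_cover : forall x, exists i, cm_chart_dom i x;
  cm_chart_inj : forall i x y, cm_chart_dom i x -> cm_chart_dom i y ->
      cm_chart i x = cm_chart i y -> x = y;
  cm_chart_cont : forall i (W : Cn cm_dim -> Prop), Cn_open W ->
      cm_open (fun x => cm_chart_dom i x /\ W (cm_chart i x));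
  (* charts are open maps on their domains (so homeomorphisms onto open sets) *)
  cm_chart_openmap : forall i (V : cm_pt -> Prop), cm_open V ->
      Cn_open (fun z => exists x, cm_chart_dom i x /\ V x /\ cm_chart i x = z);
  cm_transition : forall i j, exists G : Cn cm_dim -> Cn cm_dim,
      (forall k, Cn_holomorphic_on
          (fun z => exists x, cm_chart_dom i x /\ cm_chart_dom j x /\ cm_chart i x = z)
          (fun z => G z k)) /\
      (forall x, cm_chart_dom i x -> cm_chart_dom j x ->
          G (cm_chart i x) = cm_chart j x)
}.

Section ManifoldNotions.
Variable X : ComplexManifold.

Definition is_open (U : X -> Prop) : Prop := cm_open X U.

Definition subset (A B : X -> Prop) : Prop := forall x, A x -> B x.

Definition interior (S : X -> Prop) : X -> Prop :=
  fun x => exists U, is_open U /\ U x /\ subset U S.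

Definition is_compact (S : X -> Prop) : Prop :=
  forall (I : Type) (F : I -> X -> Prop),
    (forall i, is_open (F i)) -> (forall x, S x -> exists i, F i x) ->
    exists l : list I, forall x, S x -> exists i, In i l /\ F i x.

Definition holomorphic_on (V : X -> Prop) (f : X -> C) : Prop :=
  is_open V /\
  forall i : cm_chart_index X, exists G : Cn (cm_dim X) -> C,
    Cn_holomorphic_on
      (fun z => exists x, cm_chart_dom X i x /\ V x /\ cm_chart X i x = z) G /\
    (forall x, cm_chart_dom X i x -> V x -> G (cm_chart X i x) = f x).

Definition in_O (L : X -> Prop) (f : X -> C) : Prop :=
  exists V, subset L V /\ holomorphic_on V f.

(* |f x| <= sup_K |f|, i.e. |f x| is below every upper bound of |f| on K *)
Definition le_sup_on (K : X -> Prop) (f : X -> C) (x : X) : Prop :=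
  forall M : R, (forall y, K y -> Cmod (f y) <= M) -> Cmod (f x) <= M.

Definition hull (K L : X -> Prop) : X -> Prop :=
  fun x => L x /\ forall f, in_O L f -> le_sup_on K f x.

Definition set_eq (A B : X -> Prop) : Prop := forall x, A x <-> B x.

Definition exhaustion (K : nat -> X -> Prop) : Prop :=
  (forall j, is_compact (K j)) /\
  (forall j, subset (K j) (interior (K (S j)))) /\
  (forall x, exists j, K j x).

End ManifoldNotions.

(* The hull of B in L grows with L. Every compact set lies in some member of
   any exhaustion, so choose l1 with K j0 inside L l1; for l >= l1 choose
   j >= j0 with L l inside K j. Then the hull of B in L l1 and in L l is
   squeezed between its hulls in K j0 and in K j, which coincide. *)
From Stdlib Require Import Reals List Lia.
From Coquelicot Require Import Coquelicot.

Section Hulls.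
Variable X : ComplexManifold.

Lemma exhaustion_subset_le (E : nat -> X -> Prop) : exhaustion X E ->
  forall j k, (j <= k)%nat -> subset X (E j) (E k).
Proof.
  intros [_ [Hint _]] j k Hjk; induction Hjk as [|k _ IH]; intros x Hx; auto.
  destruct (Hint k x (IH x Hx)) as [U [_ [HUx HUsub]]].
  now apply HUsub.
Qed.

(* A finite subcover by open sets each lying in some E j involves finitely
   many indices; the E j increase, so the largest of them does the job. *)
Lemma compact_subset_exhaustion (E : nat -> X -> Prop) (S0 : X -> Prop) :
  exhaustion X E -> is_compact X S0 -> exists j, subset X S0 (E j).
Proof.
  intros HE HS.
  set (I := {U : X -> Prop & {j : nat | is_open X U /\ subset X U (E j)}}).
  set (index := fun i : I => proj1_sig (projT2 i)).
  destruct (HS I (@projT1 _ _)) as [cover Hcover].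
  - intros i; exact (proj1 (proj2_sig (projT2 i))).
  - intros x _; destruct HE as [_ [Hint Hcov]].
    destruct (Hcov x) as [j Hj].
    destruct (Hint j x Hj) as [U [HU [HUx HUsub]]].
    now exists (existT _ U (exist _ (S j) (conj HU HUsub))).
  - exists (list_max (map index cover)); intros x Hx.
    destruct (Hcover x Hx) as [[U [j [HU HUsub]]] [Hin HUx]].
    assert (Hj : (j <= list_max (map index cover))%nat).
    { pose proof (proj1 (list_max_le (map index cover) _) (le_n _)) as Hall.
      rewrite Forall_forall in Hall; exact (Hall _ (in_map index _ _ Hin)). }
    exact (exhaustion_subset_le E HE _ _ Hj x (HUsub x HUx)).
Qed.

Lemma hull_subset_mono (B L L' : X -> Prop) : subset X L L' ->
  subset X (hull X B L) (hull X B L').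
Proof.
  intros HLL' x [HLx Hsup]; split; [now apply HLL'|].
  intros f [V [HL'V Hholo]]; apply Hsup.
  exists V; split; [intros y Hy; apply HL'V, HLL', Hy | exact Hholo].
Qed.

Lemma hull_squeeze (B L0 L1 L2 L3 : X -> Prop) :
  subset X L0 L1 -> subset X L1 L2 -> subset X L2 L3 ->
  set_eq X (hull X B L3) (hull X B L0) -> set_eq X (hull X B L2) (hull X B L1).
Proof.
  intros H01 H12 H23 Heq x; split.
  - intros Hx; apply (hull_subset_mono B L0 L1 H01), Heq,
      (hull_subset_mono B L2 L3 H23), Hx.
  - apply (hull_subset_mono B L1 L2 H12).
Qed.

End Hulls.

Theorem lemma4p1 (X : ComplexManifold) (K : nat -> X -> Prop) (B : X -> Prop) :
  exhaustion X K ->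
  is_compact X B ->
  (exists j0 : nat, subset X B (K j0) /\
     forall j, (j0 <= j)%nat -> set_eq X (hull X B (K j)) (hull X B (K j0))) ->
  forall L : nat -> X -> Prop,
    exhaustion X L ->
    exists l1 : nat, subset X B (L l1) /\
      forall l, (l1 <= l)%nat -> set_eq X (hull X B (L l)) (hull X B (L l1)).
Proof.
  intros HK _ [j0 [HBK Hstable]] L HL.
  destruct (compact_subset_exhaustion X L (K j0) HL (proj1 HK j0)) as [l1 HKL].
  exists l1; split; [intros x Hx; apply HKL, HBK, Hx|].
  intros l Hl.
  destruct (compact_subset_exhaustion X K (L l) HK (proj1 HL l)) as [j HLK].
  apply (hull_squeeze X B (K j0) (L l1) (L l) (K (Nat.max j j0))).
  - exact HKL.
  - exact (exhaustion_subset_le X L HL _ _ Hl).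
  - intros x Hx; apply (exhaustion_subset_le X K HK j); [lia | now apply HLK].
  - apply Hstable; lia.
Qed.
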